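(* Let two players have additive valuations $v_1,v_2$ on a finite set of goods $M$, normalized so that $v_1(M)=v_2(M)=1$. Assume each has nonzero marginal utility, i.e. $v_i(\{g\})>0$ for every good $g$ and each $i$. Then every leximin solution is both EFX and Pareto optimal.
   Context: A valuation is a function $v:2^M\to\mathbb{R}_{\ge0}$ with $v(\emptyset)=0$ that is monotone: $v(S)\le v(T)$ whenever $S\subseteq T$. It is additive if $v(S)=\sum_{g\in S}v(\{g\})$ for all $S\subseteq M$. An allocation is an ordered partition $(A_1,\dots,A_n)$ of $M$; parts may be empty. It is EFX if for all players $i,j$ and every $g\in A_j$ we have $v_i(A_i)\ge v_i(A_j\setminus\{g\})$. It is Pareto optimal (PO) if there is no allocation $B$ with $v_i(B_i)\ge v_i(A_i)$ for all $i$ and $v_j(B_j)>v_j(A_j)$ for some $j$. For an allocation $A$, consider the multiset of utilities $\{v_i(A_i)\}_i$ sorted in increasing order. The leximin comparison is defined by: $A\prec B$ if and only if the sorted utility vector of $A$ is lexicographically smaller than that of $B$. A leximin solution is an allocation $A$ with no allocation $B$ satisfying $A\prec B$. *)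

From HB Require Import structures.
From mathcomp Require Import all_boot all_order all_algebra.
Set Implicit Arguments. Unset Strict Implicit. Unset Printing Implicit Defensive.
Import Order.TTheory GRing.Theory Num.Theory.
Local Open Scope ring_scope.

Section Fair.
Variables (R : realFieldType) (M : finType) (n : nat).

Definition valuation (u : {set M} -> R) : Prop :=
  u set0 = 0 /\ (forall S, 0 <= u S) /\
  (forall S T : {set M}, S \subset T -> u S <= u T).

Definition additive_val (u : {set M} -> R) : Prop :=
  forall S : {set M}, u S = \sum_(g in S) u [set g].

(* An allocation (ordered partition of M into n parts, parts may be empty)
   is represented by the owner map M -> 'I_n; bundle i is its preimage. *)
Definition bundle (A : M -> 'I_n) (i : 'I_n) : {set M} := [set g | A g == i].

Definition EFX (v : 'I_n -> {set M} -> R) (A : M -> 'I_n) : Prop :=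
  forall i j : 'I_n, forall g, g \in bundle A j ->
    v i (bundle A j :\ g) <= v i (bundle A i).

Definition pareto_optimal (v : 'I_n -> {set M} -> R) (A : M -> 'I_n) : Prop :=
  ~ exists B : M -> 'I_n,
      (forall i, v i (bundle A i) <= v i (bundle B i)) /\
      (exists j, v j (bundle A j) < v j (bundle B j)).

Definition sorted_utils (v : 'I_n -> {set M} -> R) (A : M -> 'I_n) : seq R :=
  sort <=%R [seq v i (bundle A i) | i <- enum 'I_n].

Fixpoint lex_lt (s t : seq R) : bool :=
  match s, t with
  | x :: s', y :: t' => (x < y) || ((x == y) && lex_lt s' t')
  | _, _ => false
  end.

Definition leximin_lt (v : 'I_n -> {set M} -> R) (A B : M -> 'I_n) : bool :=
  lex_lt (sorted_utils v A) (sorted_utils v B).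

Definition leximin_solution (v : 'I_n -> {set M} -> R) (A : M -> 'I_n) : Prop :=
  ~ exists B : M -> 'I_n, leximin_lt v A B.

End Fair.

(* With two players a leximin solution first maximises the smaller utility
   and then the larger one.  A Pareto improvement raises both sorted entries
   weakly and their sum strictly, so it is a leximin improvement.  If player
   i envies j's bundle minus a good g, let m be the smaller utility and a the
   utility of i, so m <= a < v_i(A_j \ g) < 1 - a.  Moving g to i, or else
   handing A_j \ g to i, gives an allocation in which both players get more
   than m; which of the two works depends on whether j keeps more than m
   after losing g. *)
From HB Require Import structures.
From mathcomp Require Import all_boot all_order all_algebra.
From mathcomp Require Import lra.
Import Order.TTheory GRing.Theory Num.Theory.
Local Open Scope ring_scope.
Set Implicit Arguments. Unset Strict Implicit.

Section TwoEntryLex.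
Variable R : realFieldType.

Lemma sort_pair (x y : R) : sort <=%R [:: x; y] = [:: Num.min x y; Num.max x y].
Proof. by rewrite /sort /=; case: (lerP x y) => /=; rewrite ?merge0s ?merges0. Qed.

Lemma lex_lt_min (x1 y1 x2 y2 : R) : x1 < x2 -> lex_lt [:: x1; y1] [:: x2; y2].
Proof. by move=> /= ->. Qed.

Lemma lex_lt_min_max (a0 a1 b0 b1 : R) :
  a0 <= b0 -> a1 <= b1 -> a0 + a1 < b0 + b1 ->
  lex_lt [:: Num.min a0 a1; Num.max a0 a1] [:: Num.min b0 b1; Num.max b0 b1].
Proof.
move=> le0 le1; rewrite -(addr_min_max a0) -(addr_min_max b0) => lt_sum.
have le_min01 : Num.min a0 a1 <= Num.min b0 b1.
  by rewrite le_min !ge_min le0 le1 orbT.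
have [lt_min01 | ge_min01] := ltP (Num.min a0 a1) (Num.min b0 b1).
  exact: lex_lt_min.
have eq_min : Num.min a0 a1 = Num.min b0 b1 by apply/le_anti; rewrite le_min01 ge_min01.
by rewrite /= eq_min eqxx ltxx /=; rewrite eq_min in lt_sum; lra.
Qed.

End TwoEntryLex.

Section NormalizedAdditive.
Variables (R : realFieldType) (M : finType) (u : {set M} -> R).
Hypothesis u_add : additive_val u.

Lemma additive_setD1 (S : {set M}) (g : M) : g \in S -> u (S :\ g) = u S - u [set g].
Proof. by move=> Sg; rewrite (u_add S) (u_add (S :\ g)) (big_setD1 g Sg) /= addrC addrK. Qed.

Hypothesis u_norm : u [set: M] = 1.

Lemma additive_setC (S : {set M}) : u (~: S) = 1 - u S.
Proof.
have := u_norm; rewrite u_add (big_setID S) setTI setTD /= -!u_add => <-.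
by rewrite addrC addrK.
Qed.

End NormalizedAdditive.

Lemma exists_bundle (M : finType) (n : nat) (i j : 'I_n) (X : {set M}) :
  j != i -> exists B : M -> 'I_n, bundle B i = X.
Proof.
move=> ji; exists (fun g => if g \in X then i else j); apply/setP => g.
by rewrite inE; case: (g \in X); rewrite ?eqxx ?(negbTE ji).
Qed.

Lemma ord2_other (i j k : 'I_2) : i != j -> k = i \/ k = j.
Proof.
by case: i j k => [[|[|?]] ?] [[|[|?]] ?] [[|[|?]] ?] //= _;
  [left | right | right | left]; apply/val_inj.
Qed.

Lemma bundle2_setC (M : finType) (B : M -> 'I_2) (i j : 'I_2) :
  i != j -> bundle B j = ~: bundle B i.
Proof.
move=> ij; apply/setP => g; rewrite !inE.
by case: (ord2_other (B g) ij) => ->; rewrite ?eqxx ?(negbTE ij) // eq_sym (negbTE ij).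
Qed.

Section TwoPlayers.
Variables (R : realFieldType) (M : finType) (v : 'I_2 -> {set M} -> R).

Definition min_util (A : M -> 'I_2) : R :=
  Num.min (v ord0 (bundle A ord0)) (v ord_max (bundle A ord_max)).

Definition max_util (A : M -> 'I_2) : R :=
  Num.max (v ord0 (bundle A ord0)) (v ord_max (bundle A ord_max)).

Lemma sorted_utils2 (A : M -> 'I_2) : sorted_utils v A = [:: min_util A; max_util A].
Proof.
rewrite /sorted_utils enum_ordSl enum_ordSl enum_ord0 /= -sort_pair.
by congr (sort _ [:: _; v _ (bundle A _)]); apply/val_inj.
Qed.

Lemma min_util_le (A : M -> 'I_2) (k : 'I_2) : min_util A <= v k (bundle A k).
Proof.
by case: (ord2_other k (isT : ord0 != ord_max :> 'I_2)) => ->;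
  rewrite ge_min lexx ?orbT.
Qed.

Lemma leximin_lt_above_min (A B : M -> 'I_2) :
  (forall k, min_util A < v k (bundle B k)) -> leximin_lt v A B.
Proof. by move=> gt_min; rewrite /leximin_lt !sorted_utils2 lex_lt_min // lt_min !gt_min. Qed.

Lemma leximin_lt_pareto (A B : M -> 'I_2) :
  (forall k, v k (bundle A k) <= v k (bundle B k)) ->
  (exists j, v j (bundle A j) < v j (bundle B j)) -> leximin_lt v A B.
Proof.
move=> le_AB [j lt_j]; rewrite /leximin_lt !sorted_utils2.
apply: lex_lt_min_max; rewrite ?le_AB //.
have := le_AB ord0; have := le_AB ord_max.
by case: (ord2_other j (isT : ord0 != ord_max :> 'I_2)) => <-; lra.
Qed.

Hypotheses (v_add : forall i, additive_val (v i)) (v_norm : forall i, v i [set: M] = 1).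

Lemma bundle2_value_setC (B : M -> 'I_2) (k l : 'I_2) :
  k != l -> v k (bundle B k) = 1 - v k (bundle B l).
Proof. by move=> kl; rewrite (bundle2_setC B kl) additive_setC // opprB addrC subrK. Qed.

Lemma leximin_improves_envy (A : M -> 'I_2) (i j : 'I_2) (g : M) :
  i != j -> g \in bundle A j -> 0 < v i [set g] ->
  v i (bundle A i) < v i (bundle A j :\ g) -> exists B, leximin_lt v A B.
Proof.
move=> ij Ajg gi_pos envy.
have ji : j != i by rewrite eq_sym.
have m_le_a := min_util_le A i.
have envy_lt : v i (bundle A j :\ g) < 1 - v i (bundle A i).
  by rewrite additive_setD1 // (bundle2_value_setC A ij); lra.
have [m_lt_jg | jg_le_m] := ltP (min_util A) (v j (bundle A j :\ g)).
- have [B Bj] := exists_bundle (bundle A j :\ g) ij.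
  exists B; apply: leximin_lt_above_min => k.
  case: (ord2_other k ij) => ->; last by rewrite Bj.
  by rewrite (bundle2_value_setC B ij) Bj; lra.
- have [B Bi] := exists_bundle (bundle A j :\ g) ji.
  exists B; apply: leximin_lt_above_min => k.
  case: (ord2_other k ij) => ->; first by rewrite Bi; lra.
  by rewrite (bundle2_value_setC B ji) Bi; lra.
Qed.

End TwoPlayers.

Theorem theorem5p5 (R : realFieldType) (M : finType)
    (v : 'I_2 -> {set M} -> R)
    (hval : forall i, valuation (v i))
    (hadd : forall i, additive_val (v i))
    (hnorm : forall i, v i [set: M] = 1)
    (hpos : forall i (g : M), 0 < v i [set g])
    (A : M -> 'I_2) :
  leximin_solution v A -> EFX v A /\ pareto_optimal v A.
Proof.
move=> leximinA; split => [i j g Ajg | [B [le_AB lt_AB]]]; last first.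
  by apply: leximinA; exists B; apply: leximin_lt_pareto.
have [<- | ij] := eqVneq i j.
  by case: (hval i) => _ [_ v_mono]; apply/v_mono/subD1set.
rewrite leNgt; apply/negP => envy; apply: leximinA.
exact: leximin_improves_envy envy.
Qed.
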